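(* Let $k\ge2$, $q\in\{0,\dots,k-2\}$, $1\le\ell_1,\ell_2\le k-1$ and $\alpha\in\mathfrak{S}_k^0$ be fixed. Then $$\#\big\{\varphi\in\mathfrak{S}_k^0:\ \big|c^{-1}\varphi^{-1}\alpha^{-1}c\,(\ell_2\ k-1)(1\ \ell_1)\,\varphi\big|=q\big\}\le\frac{k^{4q}}{(2q)!}.$$
   Context: $\mathfrak{S}_k$ is the symmetric group on $\{1,\dots,k\}$, products are compositions (applied right to left), and $\mathfrak{S}_k^0:=\{\varphi\in\mathfrak{S}_k:\varphi(1)=1,\ \varphi(k)=k\}$. $c$ is the cycle $(1\,2\,\cdots\,k)$, i.e. $c(i)=i+1$ for $i<k$ and $c(k)=1$. For $x\ne y$, $(x\,y)$ is the transposition exchanging $x,y$; $(x\,x)$ denotes the identity. For $\sigma\in\mathfrak{S}_k$, $|\sigma|$ is the minimal number of transpositions needed to write $\sigma$ as a product of transpositions. *)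

(* Points {1,...,k} of the paper are encoded as 'I_k via i |-> i-1. *)
From HB Require Import structures.
From mathcomp Require Import all_boot all_order all_fingroup.
Set Implicit Arguments. Unset Strict Implicit. Unset Printing Implicit Defensive.
Local Open Scope group_scope.

(* The long cycle c = (1 2 ... k): i |-> i+1, k |-> 1 (0-indexed: i |-> i+1 mod k). *)
Definition cyc (k : nat) : 'S_k := perm (@ordS_inj k).

(* The transposition (x y) of the paper, given 1-indexed points x y in {1..k};
   (x x) is the identity (tperm x x = 1).  Out-of-range inputs give 1
   (never happens under the hypotheses of the theorem). *)
Definition tp (k x y : nat) : 'S_k :=
  match insub x.-1, insub y.-1 with
  | Some a, Some b => tperm a b
  | _, _ => 1
  end.

Definition S0 (k : nat) (phi : 'S_k) : bool :=
  [forall x : 'I_k, ((val x == 0) || (val x == k.-1)) ==> (phi x == x)].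

Definition prod_of_transp (k m : nat) (sigma : 'S_k) : bool :=
  [exists s : m.-tuple ('I_k * 'I_k),
     all (fun p => p.1 != p.2) s && (\prod_(p <- s) tperm p.1 p.2 == sigma)].

Definition tlen_eq (k : nat) (sigma : 'S_k) (m : nat) : bool :=
  prod_of_transp m sigma && [forall j : 'I_m, ~~ prod_of_transp j sigma].

From HB Require Import structures.
From mathcomp Require Import all_boot all_order all_fingroup.
From mathcomp Require Import zify.

Set Implicit Arguments.
Unset Strict Implicit.
Unset Printing Implicit Defensive.
Local Open Scope group_scope.

(* Conjugating by phi turns the permutation of the theorem into
   M * ((cyc k)^-1 ^ phi) with M independent of phi.  Since the centraliser of
   the long cycle is the cyclic group it generates, phi |-> (cyc k)^-1 ^ phi is
   injective on permutations fixing 1, so the counted set injects into the set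
   of products of q transpositions, which has at most k^(2q) elements.  Finally
   (2q)! <= k^(2q), because pairing i with 2q+1-i bounds ((2q)!)^2 by k^(4q). *)

Lemma prod_of_transpJ (k m : nat) (s g : 'S_k) :
  prod_of_transp m s -> prod_of_transp m (s ^ g).
Proof.
case/existsP=> t /andP[t_transp /eqP <-].
apply/existsP; exists [tuple of map (fun p : 'I_k * 'I_k => (g p.1, g p.2)) t].
apply/andP; split.
  rewrite /= all_map; apply/allP=> p /(allP t_transp) /=.
  by rewrite (inj_eq perm_inj).
by rewrite /= big_map conjg_prod; apply/eqP/eq_bigr=> p _; rewrite tpermJ.
Qed.

Lemma card_prod_of_transp (k m : nat) :
  (#|[set s : 'S_k | prod_of_transp m s]| <= k ^ (2 * m))%N.
Proof.
pose prod_tuple (t : m.-tuple ('I_k * 'I_k)) := \prod_(p <- t) tperm p.1 p.2.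
have -> : [set s : 'S_k | prod_of_transp m s] =
    prod_tuple @: [set t : m.-tuple _ | all (fun p : 'I_k * 'I_k => p.1 != p.2) t].
  apply/setP=> s; rewrite inE; apply/existsP/imsetP.
    by case=> t /andP[t_transp /eqP <-]; exists t; rewrite ?inE.
  by case=> t; rewrite inE => t_transp ->; exists t; rewrite t_transp eqxx.
apply: leq_trans (leq_imset_card _ _) _.
apply: leq_trans (subset_leq_card (subsetT _)) _.
by rewrite cardsT card_tuple card_prod card_ord mulnn -expnM mulnC.
Qed.

Lemma nat_AGM2_leq (a b k : nat) : (a + b <= 2 * k)%N -> (a * b <= k ^ 2)%N.
Proof.
move=> ab_le; rewrite -(leq_pmul2l (isT : 0 < 4)%N).
apply: leq_trans (nat_AGM2 a b) _.
by rewrite -[4%N]/(2 ^ 2)%N -expnMn leq_exp2r.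
Qed.

Lemma fact_leq_expn (n k : nat) : (n < 2 * k)%N -> (n`! <= k ^ n)%N.
Proof.
move=> n_lt_2k; rewrite -(@leq_exp2r _ _ 2) // -expnM mulnC expnM.
have fact_ord : n`! = (\prod_(i < n) i.+1)%N.
  by rewrite fact_prod big_add1 /= big_mkord.
have fact_rev : n`! = (\prod_(i < n) (n - i))%N.
  rewrite fact_ord (reindex_inj rev_ord_inj) /=.
  by apply: eq_bigr=> i _; rewrite subnSK.
rewrite expnSr expn1 {1}fact_ord fact_rev -big_split /=.
have -> : ((k ^ 2) ^ n = \prod_(i < n) k ^ 2)%N by rewrite prod_nat_const card_ord.
by apply: leq_prod=> i _; apply: nat_AGM2_leq; move: (ltn_ord i); lia.
Qed.

Section LongCycle.

Variables (k : nat) (z : 'I_k).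
Hypothesis z0 : val z = 0%N.

Lemma cyc_expg_val (n : nat) : (n < k)%N -> val ((cyc k ^+ n) z) = n.
Proof.
elim: n => [|n IHn] lt_n_k; first by rewrite expg0 perm1.
by rewrite expgSr permM /cyc permE /= IHn ?modn_small // ltnW.
Qed.

Lemma commute_cyc_fix_eq1 (u : 'S_k) : commute u (cyc k) -> u z = z -> u = 1.
Proof.
move=> cu uz; apply/permP=> x; rewrite perm1.
have x_orbit : (cyc k ^+ x) z = x by apply: val_inj; rewrite cyc_expg_val.
by rewrite -x_orbit -permM -(commuteX x cu) permM uz.
Qed.

Lemma conjg_cyc_inj (p1 p2 : 'S_k) :
  p1 z = z -> p2 z = z -> cyc k ^ p1 = cyc k ^ p2 -> p1 = p2.
Proof.
move=> p1z p2z eq_conj.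
have cyc_fix : cyc k ^ (p1 * p2^-1) = cyc k by rewrite conjgM eq_conj conjgK.
suff : p1 * p2^-1 = 1 by move/eqP; rewrite -eq_mulgV1 => /eqP.
apply: commute_cyc_fix_eq1; last by rewrite permM p1z -{1}p2z permK.
by move/conjg_fixP/commgP: cyc_fix.
Qed.

End LongCycle.

Theorem lemma6 (k q l1 l2 : nat) (alpha : 'S_k)
  (hk : 2 <= k) (hq : q <= k - 2)
  (hl1 : 1 <= l1 <= k - 1) (hl2 : 1 <= l2 <= k - 1)
  (halpha : S0 alpha) :
  (#|[set phi : 'S_k | S0 phi &&
      tlen_eq (phi * tp k 1 l1 * tp k l2 (k - 1) * cyc k * alpha^-1
               * phi^-1 * (cyc k)^-1) q]| * (2 * q)`! <= k ^ (4 * q))%N.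
Proof.
set A := [set phi : 'S_k | _].
set M := tp k 1 l1 * tp k l2 (k - 1) * cyc k * alpha^-1.
pose z : 'I_k := Ordinal (ltnW hk).
have S0_fix phi : S0 phi -> phi z = z.
  by move/forallP/(_ z)/implyP=> /(_ isT)/eqP.
have f_inj : {in A &, injective (fun phi => M * (cyc k)^-1 ^ phi)}.
  move=> p1 p2; rewrite !inE => /andP[/S0_fix p1z _] /andP[/S0_fix p2z _].
  move/mulgI; rewrite !conjVg => /invg_inj.
  exact: (conjg_cyc_inj (erefl : val z = 0%N)).
have card_A : (#|A| <= k ^ (2 * q))%N.
  rewrite -(card_in_imset f_inj); apply: leq_trans (card_prod_of_transp k q).
  apply: subset_leq_card; apply/subsetP=> _ /imsetP[phi + ->].
  rewrite !inE => /andP[_ /andP[/(prod_of_transpJ phi) + _]].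
  by rewrite conjgE /M !mulgA mulVg mul1g.
have card_fact : ((2 * q)`! <= k ^ (2 * q))%N by apply: fact_leq_expn; lia.
rewrite (_ : 4 * q = 2 * q + 2 * q)%N; last by lia.
by rewrite expnD leq_mul.
Qed.
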